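(* Let $R$ be a ring, $M$ an $R$-module of finite length, and $S:=R(+)M$ the idealization of $M$. Let $\{S_i\}_{i=0}^n$ be the Loewy series of the ring extension $R\subseteq S$. Then $S_i=R(+)M_i$ for each $i\in\{0,\ldots,n\}$, where $\{M_i\}$ is the Loewy series of the lattice $\Lambda(M)$ of $R$-submodules of $M$. In particular $\pounds[R,S]=\lambda(M)$.
   Context: All rings are commutative with identity. The idealization $R(+)M$ is $R\times M$ with componentwise addition and multiplication $(r,m)(s,n)=(rs,rn+sm)$; $R$ is identified with $\{(r,0)\}$ and for a submodule $N$ of $M$, $R(+)N$ is a subring. For a ring extension $A\subseteq B$, $[A,B]$ is the lattice of $A$-subalgebras; $T\subset U$ minimal means $[T,U]=\{T,U\}$; atoms of $[A,B]$ are $C$ with $A\subset C$ minimal; the socle $\mathcal S[A,B]$ is the product of all atoms. Loewy series of $A\subseteq B$: $S_0=A$, $S_{i+1}=\mathcal S[S_i,B]$ while $S_i\neq B$; $\pounds[A,B]$ is the least $n$ with $S_n=B$. The Loewy series of $\Lambda(M)$ is $M_0=0$, $M_{i+1}=$ the sum of all submodules $N\supseteq M_i$ with $N/M_i$ simple, while $M_i\neq M$; $\lambda(M)$ is the least $n$ with $M_n=M$. *)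

From mathcomp Require Import all_boot all_algebra.
Set Implicit Arguments. Unset Strict Implicit. Unset Printing Implicit Defensive.
Import GRing.Theory.
Local Open Scope ring_scope.

Definition pset (T : Type) := T -> Prop.
Definition psub T (A B : pset T) := forall x, A x -> B x.
Definition peq T (A B : pset T) := forall x, A x <-> B x.
Definition pproper T (A B : pset T) := psub A B /\ ~ peq A B.

Section Idealization.
Variables (R : comPzRingType) (M : lmodType R).

Definition submod (N : pset M) :=
  [/\ N 0, (forall x y, N x -> N y -> N (x + y)) &
      (forall (r : R) x, N x -> N (r *: x))].

(* N / L is a simple module (L, N submodules with L <= N). *)
Definition simple_quot (L N : pset M) :=
  pproper L N /\
  forall P, submod P -> psub L P -> psub P N -> peq P L \/ peq P N.

Definition finite_length :=
  exists (k : nat) (N : nat -> pset M),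
    [/\ peq (N 0%N) (fun x => x = 0), peq (N k) (fun _ => True),
        (forall j, submod (N j)) &
        (forall j, (j < k)%N -> simple_quot (N j) (N j.+1))].

(* Sum of all submodules N containing L with N/L simple (the empty sum,
   i.e. L itself, when there are none): the smallest submodule containing
   L and all such N. *)
Definition mod_loewy_step (L : pset M) : pset M :=
  fun x => forall P, submod P -> psub L P ->
    (forall N, submod N -> psub L N -> simple_quot L N -> psub N P) -> P x.

Fixpoint mod_loewy (i : nat) : pset M :=
  match i with
  | 0%N => fun x => x = 0
  | i'.+1 => mod_loewy_step (mod_loewy i')
  end.

Definition iadd (x y : R * M) : R * M := (x.1 + y.1, x.2 + y.2).
Definition iopp (x : R * M) : R * M := (- x.1, - x.2).
Definition imul (x y : R * M) : R * M := (x.1 * y.1, x.1 *: y.2 + y.1 *: x.2).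

Definition Rimg : pset (R * M) := fun x => x.2 = 0.
Definition ideal_sub (N : pset M) : pset (R * M) := fun x => N x.2.

Definition subalg (T : pset (R * M)) :=
  [/\ psub Rimg T,
      (forall x y, T x -> T y -> T (iadd x y)),
      (forall x, T x -> T (iopp x)) &
      (forall x y, T x -> T y -> T (imul x y))].

Definition minimal_ext (T U : pset (R * M)) :=
  pproper T U /\
  forall C, subalg C -> psub T C -> psub C U -> peq C T \/ peq C U.

Definition atom (T C : pset (R * M)) := subalg C /\ minimal_ext T C.

(* socle of [T,S]: the product (compositum) of all atoms of [T,S], i.e. the
   smallest subalgebra containing all of them (T itself if there is none). *)
Definition socle (T : pset (R * M)) : pset (R * M) :=
  fun x => forall C, subalg C -> psub T C ->
    (forall A, atom T A -> psub A C) -> C x.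

Fixpoint ring_loewy (i : nat) : pset (R * M) :=
  match i with
  | 0%N => Rimg
  | i'.+1 => socle (ring_loewy i')
  end.

End Idealization.

(** The intermediate rings of R ⊆ R(+)M are exactly the R(+)N, N a submodule
   of M: a subring C containing R is determined by N = {m | (0,m) ∈ C}, since
   (r,m) = (r,0) + (0,m).  This lattice isomorphism [R,S] ≅ Λ(M) matches
   minimal extensions with simple quotients, hence atoms and socles, hence the
   two Loewy series term by term.  Finiteness of the length only serves to
   make the series reach M: by induction along a composition series
   0 = N_0 ⊂ ... ⊂ N_k = M one gets N_j ⊆ M_j, because (N_(j+1) + M_j)/M_j is
   zero or a quotient of the simple N_(j+1)/N_j. *)
From mathcomp Require Import all_boot all_algebra.
From Stdlib Require Import Classical FunctionalExtensionality PropExtensionality.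
From Stdlib Require Wf_nat.
Set Implicit Arguments. Unset Strict Implicit. Unset Printing Implicit Defensive.
Import GRing.Theory.
Local Open Scope ring_scope.

Lemma peq_eq (T : Type) (A B : pset T) : peq A B -> A = B.
Proof.
move=> AB; apply: functional_extensionality => x.
exact: propositional_extensionality (AB x).
Qed.

Lemma classic_ex_minn (P : nat -> Prop) :
  (exists n, P n) -> exists2 n, P n & forall k, (k < n)%N -> ~ P k.
Proof.
move=> exP; have [n [[Pn n_least] _]] :=
  Wf_nat.dec_inh_nat_subset_has_unique_least_element P (fun k => classic (P k)) exP.
by exists n => // k lt_kn /n_least /leP; rewrite leqNgt lt_kn.
Qed.

Section Idealization.
Variables (R : comPzRingType) (M : lmodType R).
Implicit Types (L N P : pset M) (C : pset (R * M)).

Definition module_part C : pset M := fun m => C (0, m).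

Lemma subalg_ideal_sub N : submod N -> subalg (ideal_sub N).
Proof.
case=> N0 ND NZ; split.
- by move=> x; rewrite /Rimg /ideal_sub => ->.
- by move=> x y; apply: ND.
- by move=> x Nx; rewrite /ideal_sub /iopp /= -scaleN1r; apply: NZ.
- by move=> x y Nx Ny; rewrite /ideal_sub /imul /=; apply: ND; apply: NZ.
Qed.

Lemma submod_module_part C : subalg C -> submod (module_part C).
Proof.
case=> RC CD _ CM; split.
- exact: RC.
- by move=> x y Cx Cy; have := CD _ _ Cx Cy; rewrite /iadd /= addr0.
- move=> r x Cx; have Cr : C (r, 0) by apply: RC.
  by have := CM _ _ Cr Cx; rewrite /imul /= mulr0 scale0r addr0.
Qed.

Lemma subalg_ideal_subE C : subalg C -> C = ideal_sub (module_part C).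
Proof.
case=> RC CD CN _; apply: peq_eq => -[r m].
have Cr : C (r, 0) by apply: RC.
rewrite /ideal_sub /module_part /=; split => Cm.
- by have := CD _ _ (CN _ Cr) Cm; rewrite /iadd /iopp /= addNr oppr0 add0r.
- by have := CD _ _ Cr Cm; rewrite /iadd /= addr0 add0r.
Qed.

Lemma psub_ideal_sub L N : psub (@ideal_sub R M L) (ideal_sub N) <-> psub L N.
Proof. by split=> LN x Lx; [exact: (LN (0, x)) | exact: LN]. Qed.

Lemma peq_ideal_sub L N : peq (@ideal_sub R M L) (ideal_sub N) <-> peq L N.
Proof. by split=> LN x; [exact: (LN (0, x)) | exact: LN]. Qed.

Lemma pproper_ideal_sub L N :
  pproper (@ideal_sub R M L) (ideal_sub N) <-> pproper L N.
Proof.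
rewrite /pproper psub_ideal_sub; split=> -[LN nLN]; split=> // eqLN; apply: nLN.
  exact/peq_ideal_sub.
by move/peq_ideal_sub: eqLN.
Qed.

Lemma minimal_ext_ideal_sub L N :
  minimal_ext (@ideal_sub R M L) (ideal_sub N) <-> simple_quot L N.
Proof.
split=> -[/pproper_ideal_sub LN min_LN].
- split=> // P sP LP PN.
  have [/peq_ideal_sub|/peq_ideal_sub] := min_LN _ (subalg_ideal_sub sP)
    (proj2 (psub_ideal_sub _ _) LP) (proj2 (psub_ideal_sub _ _) PN);
  by [left | right].
- split=> // C sC.
  rewrite (subalg_ideal_subE sC) => /psub_ideal_sub LC /psub_ideal_sub CN.
  have [eqCL|eqCN] := min_LN _ (submod_module_part sC) LC CN;
  by [left; apply/peq_ideal_sub | right; apply/peq_ideal_sub].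
Qed.

Lemma socle_ideal_sub L : socle (@ideal_sub R M L) = ideal_sub (mod_loewy_step L).
Proof.
apply: peq_eq => x; split.
- move=> soc_x P sP LP simple_sub_P.
  apply: (soc_x _ (subalg_ideal_sub sP)); first exact/psub_ideal_sub.
  move=> A [sA]; rewrite (subalg_ideal_subE sA) => /minimal_ext_ideal_sub simA.
  apply/psub_ideal_sub; apply: simple_sub_P (simA); first exact: submod_module_part.
  by case: simA => -[].
- move=> step_x C sC LC atoms_sub_C; rewrite (subalg_ideal_subE sC).
  apply: step_x; first exact: submod_module_part.
    by move=> m Lm; exact: (LC (0, m)).
  move=> N sN LN simLN m Nm; apply: (atoms_sub_C (ideal_sub N)) => //.
  by split; [exact: subalg_ideal_sub | exact/minimal_ext_ideal_sub].
Qed.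

Lemma ring_loewyE i : @ring_loewy R M i = ideal_sub (mod_loewy i).
Proof. by elim: i => [|i IHi] //=; rewrite IHi socle_ideal_sub. Qed.

Definition addsub L N : pset M := fun x => exists a b, L a /\ N b /\ x = a + b.

Lemma submod_addsub L N : submod L -> submod N -> submod (addsub L N).
Proof.
case=> L0 LD LZ [N0 ND NZ]; split.
- by exists 0, 0; rewrite addr0.
- move=> _ _ [a [b [La [Nb ->]]]] [a' [b' [La' [Nb' ->]]]].
  by exists (a + a'), (b + b'); rewrite addrACA; split; [exact: LD | split; first exact: ND].
- move=> r _ [a [b [La [Nb ->]]]].
  by exists (r *: a), (r *: b); rewrite scalerDr; split; [exact: LZ | split; first exact: NZ].
Qed.

Lemma psub_addsubl L N : submod N -> psub L (addsub L N).
Proof. by case=> N0 _ _ a La; exists a, 0; rewrite addr0. Qed.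

Lemma psub_addsubr L N : submod L -> psub N (addsub L N).
Proof. by case=> L0 _ _ b Nb; exists 0, b; rewrite add0r. Qed.

Lemma modular_addsub L N P : submod P -> psub L P -> psub P (addsub L N) ->
  psub P (addsub L (fun x => P x /\ N x)).
Proof.
case=> _ PD PZ LP PLN x Px; have [a [b [La [Nb def_x]]]] := PLN x Px.
exists a, b; do 2!split=> //; split=> //.
have := PD _ _ Px (PZ (-1) _ (LP _ La)).
by rewrite scaleN1r def_x addrC addKr.
Qed.

(* Second isomorphism theorem: (L + N')/L is a quotient of N'/N. *)
Lemma simple_quot_addsub L N N' : submod L -> submod N' -> psub N L ->
  simple_quot N N' -> ~ peq L (addsub L N') -> simple_quot L (addsub L N').
Proof.
move=> sL sN' NL [[NN' _] min_NN'] neqL; split=> [|P sP LP PLN'].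
  by split=> //; apply: psub_addsubl.
have [P0 PD PZ] := sP; have [N'0 N'D N'Z] := sN'.
have sPN' : submod (fun x => P x /\ N' x).
  by split=> [|x y [? ?] [? ?]|r x [? ?]]; split; auto.
have NPN' : psub N (fun x => P x /\ N' x).
  by move=> x Nx; split; [exact/LP/NL | exact: NN'].
have [eqN|eqN'] := min_NN' _ sPN' NPN' (fun _ => @proj2 _ _).
- left=> x; split=> [Px | /LP //].
  have [a [b [La [[Pb N'b] ->]]]] := modular_addsub sP LP PLN' Px.
  by have [_ LD _] := sL; apply: LD => //; apply/NL/(eqN b).
- right=> x; split=> [/PLN' // | [a [b [La [N'b ->]]]]].
  by apply: PD; [exact: LP | exact: ((eqN' b).2 N'b).1].
Qed.

Lemma psub_mod_loewy_step L : psub L (mod_loewy_step L).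
Proof. by move=> x Lx P _ LP _; exact: LP. Qed.

Lemma submod_mod_loewy_step L : submod (mod_loewy_step L).
Proof.
split=> [P [] // | x y stepx stepy P sP LP | r x stepx P sP LP] simple_sub_P;
  have [_ PD PZ] := sP.
- by apply: PD; [exact: stepx | exact: stepy].
- by apply: PZ; exact: stepx.
Qed.

Lemma submod_mod_loewy i : submod (@mod_loewy R M i).
Proof.
case: i => [|i]; last exact: submod_mod_loewy_step.
by split=> /= [|x y -> ->|r x ->]; rewrite ?addr0 ?scaler0.
Qed.

Lemma simple_quot_sub_mod_loewy_step L N N' : submod L -> submod N' -> psub N L ->
  simple_quot N N' -> psub N' (mod_loewy_step L).
Proof.
move=> sL sN' NL simNN' x N'x.
have LN'x : addsub L N' x := psub_addsubr sL N'x.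
have [eqL | neqL] := classic (peq L (addsub L N')).
  by apply: psub_mod_loewy_step; exact/(eqL x).
move=> P sP LP simple_sub_P; apply: (simple_sub_P _ _ _ _ _ LN'x).
- exact: submod_addsub.
- exact: psub_addsubl sN'.
- exact: simple_quot_addsub sL sN' NL simNN' neqL.
Qed.

Lemma mod_loewy_full : finite_length M ->
  exists n, peq (@mod_loewy R M n) (fun _ => True).
Proof.
case=> k [N [N0 Nk sN simN]].
have N_sub_loewy j : (j <= k)%N -> psub (N j) (mod_loewy j).
  elim: j => [_ x /(N0 x) //| j IHj lt_jk].
  apply: simple_quot_sub_mod_loewy_step (submod_mod_loewy j) (sN j.+1) _ (simN j lt_jk).
  exact/IHj/ltnW.
by exists k => x; split=> // _; apply: N_sub_loewy => //; exact/(Nk x).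
Qed.

End Idealization.

Theorem proposition8p15 (R : comPzRingType) (M : lmodType R) :
  finite_length M ->
  exists n : nat,
    [/\ peq (@ring_loewy R M n) (fun _ => True),
        (forall k, (k < n)%N -> ~ peq (@ring_loewy R M k) (fun _ => True)),
        peq (@mod_loewy R M n) (fun _ => True),
        (forall k, (k < n)%N -> ~ peq (@mod_loewy R M k) (fun _ => True)) &
        (forall i, (i <= n)%N -> peq (@ring_loewy R M i) (ideal_sub (@mod_loewy R M i)))].
Proof.
move=> /mod_loewy_full /classic_ex_minn [n full_n below_n].
have full_ideal_sub N := @peq_ideal_sub R M N (fun _ => True).
exists n; split=> // [|k lt_kn|i _]; rewrite ?ring_loewyE //.
- exact/full_ideal_sub.
- by move/full_ideal_sub; exact: below_n.
Qed.
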